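(* For every $n\ge0$ the maps $L,R:\mathcal{Y}_n\to\mathcal{Q}_n$, $C:\mathcal{Q}_n\to\mathcal{Y}_n$, $\lambda,\rho:\mathfrak{S}_n\to\mathcal{Y}_n$, $\gamma:\mathcal{Y}_n\to\mathfrak{S}_n$, $\mathrm{Des},\mathrm{GDes}:\mathfrak{S}_n\to\mathcal{Q}_n$ and $Z:\mathcal{Q}_n\to\mathfrak{S}_n$ are order-preserving and satisfy $L\circ\lambda=\mathrm{Des}$, $\gamma\circ C=Z$ and $R\circ\rho=\mathrm{GDes}$. Moreover, each pair $(\lambda,\gamma)$, $(L,C)$, $(\mathrm{Des},Z)$, $(\gamma,\rho)$, $(C,R)$, $(Z,\mathrm{GDes})$ is a Galois connection with the first map left adjoint to the second; that is, for all $\sigma\in\mathfrak{S}_n$, $t\in\mathcal{Y}_n$, $\mathsf{S}\in\mathcal{Q}_n$: $\lambda(\sigma)\le t\iff\sigma\le\gamma(t)$; $L(t)\subseteq\mathsf{S}\iff t\le C(\mathsf{S})$; $\mathrm{Des}(\sigma)\subseteq\mathsf{S}\iff\sigma\le Z(\mathsf{S})$; $\gamma(t)\le\sigma\iff t\le\rho(\sigma)$; $C(\mathsf{S})\le t\iff\mathsf{S}\subseteq R(t)$; $Z(\mathsf{S})\le\sigma\iff\mathsf{S}\subseteq\mathrm{GDes}(\sigma)$.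
   Context: $\mathcal{Q}_n$ is the Boolean poset of subsets of $[n-1]$ under inclusion. $\mathfrak{S}_n$ carries the weak order: $\sigma\le\tau$ iff $\mathrm{Inv}(\sigma)\subseteq\mathrm{Inv}(\tau)$, $\mathrm{Inv}(\sigma)=\{(i,j):i<j,\sigma(i)>\sigma(j)\}$. Permutations in one-line notation; $\mathrm{st}(a_1,\dots,a_p)$ is the permutation with the same relative order as distinct integers $a_i$; $\mathrm{id}_n$ identity, $\mathrm{id}_0$ empty. For $\sigma\in\mathfrak{S}_p,\tau\in\mathfrak{S}_q$: $\sigma\vee\tau=(\sigma(1)+q,\dots,\sigma(p)+q,p+q+1,\tau(1),\dots,\tau(q))$, $\sigma\backslash\tau=(\sigma(1)+q,\dots,\sigma(p)+q,\tau(1),\dots,\tau(q))$. $\mathrm{Des}(\sigma)=\{i\in[n-1]:\sigma(i)>\sigma(i+1)\}$; $\mathrm{GDes}(\sigma)=\{p\in[n-1]:\sigma=\alpha\backslash\beta,\ \alpha\in\mathfrak{S}_p\}$ (global descents). For $\mathsf{S}=\{p_1<\dots<p_k\}$, $Z(\mathsf{S})=\mathrm{id}_{p_1}\backslash\mathrm{id}_{p_2-p_1}\backslash\cdots\backslash\mathrm{id}_{n-p_k}$. Trees: $\mathcal{Y}_n$ = rooted planar binary trees with $n$ internal nodes, $\mathcal{Y}_0=\{|\}$; $s\vee t$ = tree whose root has left subtree $s$ and right subtree $t$; $t=t_l\vee t_r$ uniquely for $t\ne|$. Tamari order on $\mathcal{Y}_n$: generated by replacing a subtree $(a\vee b)\vee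 c$ by the larger $a\vee(b\vee c)$. $s\backslash t$: $|\backslash t=t$, $s\backslash t=s_l\vee(s_r\backslash t)$. $1_0=|$, $1_n=1_{n-1}\vee|$. $C(\mathsf{S})=1_{p_1}\backslash1_{p_2-p_1}\backslash\cdots\backslash1_{n-p_k}$. Numbering the leaves of $t$ by $0,\dots,n$ left to right, $L(t)=\{i\in[n-1]:\text{leaf } i\text{ is a left child}\}$. $R(t)=\{j\in[n-1]:t=r\backslash r'\text{ for some } r\in\mathcal{Y}_j\}$. $\lambda$: $\lambda(\mathrm{id}_0)=|$; for $n\ge1$, $j=\sigma^{-1}(n)$, $\lambda(\sigma)=\lambda(\mathrm{st}(\sigma(1),..,\sigma(j-1)))\vee\lambda(\mathrm{st}(\sigma(j+1),..,\sigma(n)))$. $\gamma$: $\gamma(|)=\mathrm{id}_0$, $\gamma(t)=\gamma(t_l)\vee\gamma(t_r)$. $\rho$: $\rho(\mathrm{id}_0)=|$; for $n\ge1$ let $j$ be the smallest element of $\mathrm{GDes}(\sigma)$, or $j=n$ if $\mathrm{GDes}(\sigma)=\emptyset$; then $\rho(\sigma)=\rho(\mathrm{st}(\sigma(1),\dots,\sigma(j-1)))\vee\rho(\mathrm{st}(\sigma(j+1),\dots,\sigma(n)))$. *)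

From mathcomp Require Import all_boot.
From Stdlib Require Import ClassicalEpsilon.

Set Implicit Arguments.
Unset Strict Implicit.
Unset Printing Implicit Defensive.

Definition decide (P : Prop) : bool :=
  if excluded_middle_informative P then true else false.

Definition is_perm (n : nat) (s : seq nat) : Prop := perm_eq s (iota 1 n).

(* sigma(i), 1-based *)
Definition pv (s : seq nat) (i : nat) : nat := nth 0 s i.-1.

Definition inv_pair (s : seq nat) (i j : nat) : bool :=
  [&& 0 < i, i < j, j <= size s & pv s j < pv s i].

Definition weak_le (s t : seq nat) : Prop :=
  forall i j, inv_pair s i j -> inv_pair t i j.

Definition st (a : seq nat) : seq nat :=
  map (fun x => (count (fun y => y < x) a).+1) a.

Definition pid (n : nat) : seq nat := iota 1 n.

Definition pvee (s t : seq nat) : seq nat :=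
  map (addn (size t)) s ++ (size s + size t).+1 :: t.
Definition pbs (s t : seq nat) : seq nat :=
  map (addn (size t)) s ++ t.

(* ===== Subsets of [n-1] (elements of Q_n) as boolean predicates on nat ===== *)
Definition qset (n : nat) (S : nat -> bool) : Prop :=
  forall i, S i -> 0 < i < n.
Definition subq (S T : nat -> bool) : Prop := forall i, S i -> T i.

Definition Des (s : seq nat) (i : nat) : bool :=
  (0 < i < size s) && (pv s i.+1 < pv s i).
Definition GDes (s : seq nat) (p : nat) : bool :=
  (0 < p < size s) &&
  decide (exists a b, is_perm p a /\ is_perm (size s - p) b /\ s = pbs a b).

(* the list p_1 - 0, p_2 - p_1, ..., n - p_k of block sizes of S in [n] *)
Definition blocks (n : nat) (S : nat -> bool) : seq nat :=
  pairmap (fun a b => b - a) 0 (rcons [seq i <- iota 1 n.-1 | S i] n).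

Definition Zmap (n : nat) (S : nat -> bool) : seq nat :=
  foldr (fun k acc => pbs (pid k) acc) [::] (blocks n S).

Inductive tree : Type := Leaf | Node of tree & tree.

Fixpoint nodes (t : tree) : nat :=
  if t is Node l r then (nodes l + nodes r).+1 else 0.

Fixpoint tbs (s t : tree) : tree :=
  if s is Node sl sr then Node sl (tbs sr t) else t.

Fixpoint one (n : nat) : tree :=
  if n is k.+1 then Node (one k) Leaf else Leaf.

Definition Cmap (n : nat) (S : nat -> bool) : tree :=
  foldr (fun k acc => tbs (one k) acc) Leaf (blocks n S).

Inductive rot : tree -> tree -> Prop :=
| rot_root a b c : rot (Node (Node a b) c) (Node a (Node b c))
| rot_l l l' r : rot l l' -> rot (Node l r) (Node l' r)
| rot_r l r r' : rot r r' -> rot (Node l r) (Node l r').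

Inductive tam_le : tree -> tree -> Prop :=
| tam_refl t : tam_le t t
| tam_step t u v : rot t u -> tam_le u v -> tam_le t v.

(* for each leaf, left to right: is it a left child? (root leaf: no) *)
Fixpoint leafdirs (t : tree) (isleft : bool) : seq bool :=
  if t is Node l r then leafdirs l true ++ leafdirs r false else [:: isleft].

Definition Lmap (t : tree) (i : nat) : bool :=
  (0 < i < nodes t) && nth false (leafdirs t false) i.

Definition Rmap (t : tree) (j : nat) : bool :=
  (0 < j < nodes t) && decide (exists r r', nodes r = j /\ t = tbs r r').

Fixpoint lam_f (fuel : nat) (s : seq nat) : tree :=
  if fuel is k.+1 then
    if s is [::] then Leaf else
    let j := (index (size s) s).+1 in
    Node (lam_f k (st (take j.-1 s))) (lam_f k (st (drop j s)))
  else Leaf.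
Definition lam (s : seq nat) : tree := lam_f (size s) s.

Fixpoint gam (t : tree) : seq nat :=
  if t is Node l r then pvee (gam l) (gam r) else [::].

Fixpoint rho_f (fuel : nat) (s : seq nat) : tree :=
  if fuel is k.+1 then
    if s is [::] then Leaf else
    let j := head (size s) [seq p <- iota 1 (size s).-1 | GDes s p] in
    Node (rho_f k (st (take j.-1 s))) (rho_f k (st (drop j s)))
  else Leaf.
Definition rho (s : seq nat) : tree := rho_f (size s) s.

From Pilot Require Import Defs.
From mathcomp Require Import all_boot zify.
From Stdlib Require Import ClassicalEpsilon Classical.

Set Implicit Arguments.
Unset Strict Implicit.
Unset Printing Implicit Defensive.

(* Everything is expressed through the relation [in_lsub t i k]: node [i] lies
   in the left subtree of node [k].  Its pairs are exactly the non-inversions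
   of [gam t], and [t <= t'] in the Tamari order iff [in_lsub t'] is contained
   in [in_lsub t]; so [gam] embeds the Tamari order into the weak order.  In the
   same language, [lam s] relates [i < k] iff [s k] is the maximum of
   [s i .. s k], [rho s] is the smallest tree relation containing the
   non-inversions of [s], and [C S] relates [i < k] iff no element of [S] lies
   in [[i, k)].  Each adjunction thus becomes a comparison of non-inversion sets,
   monotonicity follows formally from the adjunctions, and [R (rho s) = GDes s]
   follows by testing the adjunctions against singletons. *)

(** * Left-subtree sizes and the Tamari order *)

Fixpoint lsizes (t : tree) : seq nat :=
  if t is Node l r then lsizes l ++ nodes l :: lsizes r else [::].

(* [lsize t k] is the size of the left subtree of the [k]-th node of [t]
   in in-order, nodes being numbered from 1. *)
Definition lsize (t : tree) (k : nat) : nat := nth 0 (lsizes t) k.-1.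

Definition in_lsub (t : tree) (i k : nat) : bool :=
  [&& 0 < i, i < k, k <= nodes t & k - lsize t k <= i].

Lemma size_lsizes t : size (lsizes t) = nodes t.
Proof. by elim: t => //= l IHl r IHr; rewrite size_cat /= IHl IHr addnS. Qed.

Lemma nth_lsizes_le t j : nth 0 (lsizes t) j <= j.
Proof.
elim: t j => [|l IHl r IHr] j /=; first by rewrite nth_nil.
rewrite nth_cat size_lsizes; case: ltnP => [_|Hj]; first exact: IHl.
case E: (j - nodes l) => [|m] /=; first lia.
have := IHr m; lia.
Qed.

Lemma lsize_le t k : lsize t k <= k.-1.
Proof. exact: nth_lsizes_le. Qed.

Lemma lsize_out t k : nodes t < k -> lsize t k = 0.
Proof. by move=> Hk; rewrite /lsize nth_default // size_lsizes; lia. Qed.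

Lemma lsize_node l r k :
  lsize (Node l r) k = if k <= nodes l then lsize l k
                       else if k == (nodes l).+1 then nodes l
                       else lsize r (k - (nodes l).+1).
Proof.
rewrite /lsize /= nth_cat size_lsizes.
case: (leqP k (nodes l)) => Hk.
  case: k Hk => [|k] Hk /=; last by rewrite ifT //; lia.
  by case: ltnP => // Hl; rewrite nth_default ?size_lsizes; lia.
rewrite ifF; last lia.
case: eqP => [->|Hne]; first by rewrite subnn.
case E: (k.-1 - nodes l) => [|m] /=; first lia.
congr nth; lia.
Qed.

Lemma lsize_l l r k : k <= nodes l -> lsize (Node l r) k = lsize l k.
Proof. by move=> Hk; rewrite lsize_node Hk. Qed.

Lemma lsize_root l r : lsize (Node l r) (nodes l).+1 = nodes l.
Proof. by rewrite lsize_node ltnn eqxx. Qed.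

Lemma lsize_r l r k :
  (nodes l).+1 < k -> lsize (Node l r) k = lsize r (k - (nodes l).+1).
Proof. by move=> Hk; rewrite lsize_node ifF ?ifF //; lia. Qed.

Lemma in_lsub_range t i k : in_lsub t i k -> [&& 0 < i, i < k & k <= nodes t].
Proof. by rewrite /in_lsub => H; lia. Qed.

Lemma in_lsub_node l r i k :
  in_lsub (Node l r) i k =
  [|| (k <= nodes l) && in_lsub l i k,
      (k == (nodes l).+1) && (0 < i < k) |
      ((nodes l).+1 < i) && in_lsub r (i - (nodes l).+1) (k - (nodes l).+1)].
Proof.
have := lsize_le l k; have := lsize_le r (k - (nodes l).+1).
rewrite /in_lsub lsize_node /=; case: (leqP k (nodes l)) => Hk; first lia.
by case: eqP => [->|]; lia.
Qed.

Lemma in_lsub_narrow t i m k : in_lsub t i k -> i <= m < k -> in_lsub t m k.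
Proof. by rewrite /in_lsub => H1 H2; lia. Qed.

Lemma in_lsub_trans t i m k : in_lsub t i m -> in_lsub t m k -> in_lsub t i k.
Proof.
elim: t i m k => [|l IHl r IHr] i m k; first by rewrite /in_lsub /=; lia.
rewrite !in_lsub_node => Him Hmk.
case/or3P: Him => [/andP[H1 /[dup] H2 /in_lsub_range R2] | /andP[H1 H2]
                  | /andP[H1 /[dup] H2 /in_lsub_range R2]];
case/or3P: Hmk => [/andP[H3 /[dup] H4 /in_lsub_range R4] | /andP[H3 H4]
                  | /andP[H3 /[dup] H4 /in_lsub_range R4]]; try lia.
- by rewrite (IHl _ _ _ H2 H4) H3.
- by rewrite (IHr _ _ _ H2 H4) H1 !orbT.
Qed.

Lemma in_lsub_chain t i k :
  i < k -> (forall m, i <= m < k -> in_lsub t m m.+1) -> in_lsub t i k.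
Proof.
elim: k => // k IHk Hik Hstep.
have Hk := Hstep k ltac:(lia).
case: (ltngtP i k) => Hi; try lia; last by rewrite Hi.
by apply: in_lsub_trans (IHk Hi _) Hk => m Hm; apply: Hstep; lia.
Qed.

Lemma nodes_tbs s t : nodes (tbs s t) = nodes s + nodes t.
Proof. by elim: s => //= l _ r ->; rewrite addnA addSn. Qed.

Lemma lsizes_tbs s t : lsizes (tbs s t) = lsizes s ++ lsizes t.
Proof. by elim: s => //= l _ r ->; rewrite -catA. Qed.

Lemma nodes_one k : nodes (Defs.one k) = k.
Proof. by elim: k => //= k ->; rewrite addn0. Qed.

Lemma lsizes_one k : lsizes (Defs.one k) = iota 0 k.
Proof.
by elim: k => //= k ->; rewrite nodes_one -[0 :: _]/(iota 0 k.+1) -addn1 iotaD.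
Qed.

Lemma tam_trans t u v : tam_le t u -> tam_le u v -> tam_le t v.
Proof. by elim=> // t1 u1 v1 H _ IH /IH; apply: tam_step H. Qed.

Lemma rot_tam_le t u : Defs.rot t u -> tam_le t u.
Proof. by move=> H; apply: tam_step H (tam_refl _). Qed.

Lemma tam_nodeL l l' r : tam_le l l' -> tam_le (Node l r) (Node l' r).
Proof. by elim=> [t|t u v H _]; [exact: tam_refl | apply: tam_step (rot_l _ H)]. Qed.

Lemma tam_nodeR l r r' : tam_le r r' -> tam_le (Node l r) (Node l r').
Proof. by elim=> [t|t u v H _]; [exact: tam_refl | apply: tam_step (rot_r _ H)]. Qed.

Lemma tam_node l l' r r' :
  tam_le l l' -> tam_le r r' -> tam_le (Node l r) (Node l' r').
Proof. by move=> Hl Hr; apply: tam_trans (tam_nodeL r Hl) (tam_nodeR l' Hr). Qed.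

Lemma rot_lsize t u :
  Defs.rot t u -> nodes t = nodes u /\ forall k, lsize u k <= lsize t k.
Proof.
elim=> [a b c|l l' r _ [E H]|l r r' _ [E H]] /=; split; try lia; move=> k.
- have := lsize_le b (k - (nodes a).+1).
  case: (leqP k (nodes a)) => Hka; first by rewrite !lsize_l //=; lia.
  case: (ltngtP k (nodes a).+1) => Hk; try lia; last first.
    by rewrite Hk lsize_root lsize_l ?lsize_root //=; lia.
  rewrite (@lsize_r a (Node b c)) //=.
  case: (leqP k (nodes a + nodes b).+1) => Hkb.
    by rewrite (@lsize_l b c) ?(@lsize_l (Node a b) c) ?(@lsize_r a b) //=; lia.
  case: (ltngtP k (nodes a + nodes b).+2) => Hk2; try lia.
    rewrite (@lsize_r b c) ?(@lsize_r (Node a b) c) /=; try lia.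
    by rewrite (_ : k - _ - _ = k - (nodes a + nodes b).+2) //; lia.
  have -> : k - (nodes a).+1 = (nodes b).+1 by lia.
  by rewrite lsize_root Hk2 -[(_ + _).+2]/((nodes (Node a b)).+1) lsize_root /=; lia.
- by rewrite !lsize_node -E; case: ifP => _; [exact: H | case: ifP].
- by rewrite !lsize_node; case: ifP => // _; case: ifP => // _; exact: H.
Qed.

Lemma tam_le_lsize t u :
  tam_le t u -> nodes t = nodes u /\ forall k, lsize u k <= lsize t k.
Proof.
elim=> [v|t1 u1 v1 /rot_lsize [E1 H1] _ [E2 H2]]; first by [].
by split=> [|k]; [rewrite E1 | apply: leq_trans (H2 k) (H1 k)].
Qed.

(* Rotations along the left branch bring node [p] to the root, provided all
   nodes before [p] lie in its left subtree. *)
Lemma rotate_to_root t p : 0 < p <= nodes t -> lsize t p = p.-1 ->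
  exists A B, [/\ nodes A = p.-1, nodes (Node A B) = nodes t,
    tam_le t (Node A B) &
    forall k, 0 < k -> lsize t k <= lsize (Node A B) k \/
                       p < k /\ k - p.+1 <= lsize (Node A B) k].
Proof.
elim: t p => [|l IHl r _] p /= Hp; first lia.
case: (ltngtP p (nodes l).+1) => Hpl; last first.
- by exists l, r; rewrite Hpl; split=> //; [exact: tam_refl | left].
- by rewrite lsize_r //; have := lsize_le r (p - (nodes l).+1); lia.
rewrite lsize_l; last lia.
move=> /(IHl p ltac:(lia)) [A [B [nA nAB tl Hk]]].
exists A, (Node B r); split=> //=.
- by move: nAB => /= <-; lia.
- exact: tam_trans (tam_nodeL r tl) (rot_tam_le (rot_root A B r)).
move=> k Hk0; move: nAB => /= nAB.
case: (leqP k (nodes l)) => Hkl.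
  have -> : lsize (Node A (Node B r)) k = lsize (Node A B) k.
    case: (ltngtP k (nodes A).+1) => Hk1; last by rewrite Hk1 !lsize_root.
      by rewrite !lsize_l //; lia.
    by rewrite !(@lsize_r A) // lsize_l //; lia.
  by rewrite (@lsize_l l r) //; exact: Hk.
case: (ltngtP k (nodes l).+1) => Hk2; try lia.
  left; rewrite (@lsize_r l r) // (@lsize_r A (Node B r)) /=; last lia.
  rewrite (@lsize_r B r); last lia.
  by rewrite (_ : k - _ - _ = k - (nodes l).+1) //; lia.
right; split; first lia.
rewrite Hk2 (@lsize_r A (Node B r)) /=; last lia.
by rewrite (_ : (nodes l).+1 - (nodes A).+1 = (nodes B).+1) ?lsize_root; lia.
Qed.

Lemma lsize_tam_le t' t : nodes t = nodes t' ->
  (forall k, 0 < k -> lsize t' k <= lsize t k) -> tam_le t t'.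
Proof.
elim: t' t => [|A' IHA B' IHB] t E H; first by case: t E H => // *; apply: tam_refl.
have Hp : lsize t (nodes A').+1 = nodes A'.
  have := H (nodes A').+1 isT; have := lsize_le t (nodes A').+1.
  by rewrite lsize_root; lia.
have [A [B [nA nAB tAB Hk]]] :=
  @rotate_to_root t (nodes A').+1 (ltac:(rewrite E /=; lia)) Hp.
have HAB : forall k, 0 < k -> lsize (Node A' B') k <= lsize (Node A B) k.
  move=> k Hk0; case: (Hk k Hk0) => [|[Hpk]]; first exact: leq_trans (H k Hk0).
  by rewrite (@lsize_r A') //; have := lsize_le B' (k - (nodes A').+1); lia.
apply: tam_trans tAB _; apply: tam_node.
- apply: IHA; first by rewrite nA.
  move=> k Hk0; case: (leqP k (nodes A')) => Hk1; last by rewrite lsize_out.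
  by have := HAB k Hk0; rewrite !lsize_l //; lia.
- apply: IHB; first by move: nAB; rewrite E /=; lia.
  move=> k Hk0; have := HAB (k + (nodes A').+1) ltac:(lia).
  rewrite (@lsize_r A') ?addnK; last lia.
  by rewrite (@lsize_r A) nA /= ?addnK //; lia.
Qed.

Lemma tam_le_lsub t t' : nodes t = nodes t' ->
  tam_le t t' <-> (forall i k, in_lsub t' i k -> in_lsub t i k).
Proof.
move=> E; split=> [/tam_le_lsize [_ H] i k|H].
  by rewrite /in_lsub -E => Hik; have := H k; lia.
apply: lsize_tam_le => // k Hk.
case: (leqP k (nodes t)) => Hkt; last by rewrite lsize_out // -E.
have := H (k - lsize t' k) k; have := lsize_le t k; have := lsize_le t' k.
rewrite /in_lsub -E; lia.
Qed.

(** * Permutations and standardisation *)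

(* [lia] treats [@size T s] and [@size (Equality.sort T) s] as distinct atoms;
   normalise the type argument first. *)
Ltac size_lia := repeat (match goal with
  | |- context [@size ?T ?s] => progress change (@size T s) with (@size nat s)
  | H : context [@size ?T ?s] |- _ =>
      progress change (@size T s) with (@size nat s) in H
  end); lia.

Lemma is_perm_size n s : is_perm n s -> size s = n.
Proof. by move/perm_size; rewrite size_iota. Qed.

Lemma is_perm_uniq n s : is_perm n s -> uniq s.
Proof. by move/perm_uniq => ->; apply: iota_uniq. Qed.

Lemma is_perm_mem n s x : is_perm n s -> (x \in s) = (0 < x <= n).
Proof. by move/perm_mem => ->; rewrite mem_iota; size_lia. Qed.

Lemma uniq_is_perm n s :
  uniq s -> size s = n -> (forall x, x \in s -> 0 < x <= n) -> is_perm n s.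
Proof.
move=> Us Ss Hs; apply: uniq_perm => //; first exact: iota_uniq.
have [] // := @uniq_min_size _ s (iota 1 n) Us.
- by move=> x /Hs; rewrite mem_iota; size_lia.
- by rewrite size_iota Ss.
Qed.

Lemma pv_mem s i : 0 < i <= size s -> pv s i \in s.
Proof. by move=> Hi; apply: mem_nth; size_lia. Qed.

Lemma pv_inj s i k : uniq s -> 0 < i <= size s -> 0 < k <= size s ->
  pv s i = pv s k -> i = k.
Proof.
move=> Us Hi Hk E.
have := @nth_uniq _ 0 s i.-1 k.-1 ltac:(size_lia) ltac:(size_lia) Us.
by rewrite [nth _ _ _]E eqxx; size_lia.
Qed.

Lemma pv_range n s i : is_perm n s -> 0 < i <= n -> 0 < pv s i <= n.
Proof.
by move=> Ps Hi; rewrite -(is_perm_mem _ Ps) pv_mem // (is_perm_size Ps).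
Qed.

Lemma pv_ltNgt n s i k : is_perm n s -> 0 < i -> i < k -> k <= n ->
  (pv s i < pv s k) = ~~ (pv s k < pv s i).
Proof.
move=> Ps Hi Hik Hk; have Ss := is_perm_size Ps.
have/eqP : pv s i != pv s k.
  by apply/eqP => /(pv_inj (is_perm_uniq Ps)); rewrite Ss; lia.
by case: ltngtP.
Qed.

Lemma inv_pair_perm n s i k : is_perm n s ->
  Defs.inv_pair s i k = [&& 0 < i, i < k, k <= n & pv s k < pv s i].
Proof. by move=> Ps; rewrite /Defs.inv_pair (is_perm_size Ps). Qed.

Lemma weak_refl s : weak_le s s.
Proof. by []. Qed.

Lemma weak_trans s t u : weak_le s t -> weak_le t u -> weak_le s u.
Proof. by move=> Hst Htu i j /Hst /Htu. Qed.

Lemma descent_between s i k : i < k -> pv s k < pv s i ->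
  exists2 m, i <= m < k & pv s m.+1 < pv s m.
Proof.
elim: k => // k IHk Hik Hlt.
case: (ltnP (pv s k.+1) (pv s k)) => Hk; first by exists k => //; lia.
case: (ltngtP i k) => Hi; try lia; last by rewrite Hi in Hlt; lia.
by have [|m Hm Hd] := IHk Hi; [lia | exists m => //; lia].
Qed.

Lemma leq_count_lt (a : seq nat) x y :
  x <= y -> count (fun z => z < x) a <= count (fun z => z < y) a.
Proof. by move=> Hxy; apply: sub_count => z /=; lia. Qed.

Lemma ltn_count_lt (a : seq nat) x y :
  x \in a -> x < y -> count (fun z => z < x) a < count (fun z => z < y) a.
Proof.
move=> Ha Hxy.
have -> : count (fun z => z < y) a =
          count (fun z => z < x) a + count (fun z => x <= z < y) a.
  rewrite -count_predUI.
  have /eqP -> : count (predI (fun z => z < x) (fun z => x <= z < y)) a == 0.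
    by rewrite -leqn0 leqNgt -has_count; apply/hasP => -[z _ /=]; lia.
  by rewrite addn0; apply: eq_count => z /=; lia.
by rewrite -ltn_subLR ?subnn // -has_count; apply/hasP; exists x => //=; lia.
Qed.

Lemma count_lt_size (a : seq nat) x : x \in a -> count (fun z => z < x) a < size a.
Proof.
move=> Ha; rewrite -(count_predC (fun z => z < x) a) -ltn_subLR ?subnn //.
by rewrite -has_count; apply/hasP; exists x => //=; rewrite ltnn.
Qed.

Lemma size_st a : size (st a) = size a.
Proof. by rewrite size_map. Qed.

Lemma pv_st a i : 0 < i <= size a ->
  pv (st a) i = (count (fun y => y < pv a i) a).+1.
Proof. by move=> Hi; rewrite /pv (nth_map 0) //; size_lia. Qed.

Lemma st_ltE a i k : 0 < i <= size a -> 0 < k <= size a ->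
  (pv (st a) i < pv (st a) k) = (pv a i < pv a k).
Proof.
move=> Hi Hk; rewrite !pv_st // ltnS.
case: (ltnP (pv a i) (pv a k)) => H; first exact/ltn_count_lt/H/pv_mem.
by apply/negbTE; rewrite -leqNgt leq_count_lt.
Qed.

Lemma st_is_perm a : uniq a -> is_perm (size a) (st a).
Proof.
move=> Ua; apply: uniq_is_perm; rewrite ?size_st //.
  rewrite map_inj_in_uniq // => x y Hx Hy /= [E].
  by case: (ltngtP x y) => // Hxy;
    [have := ltn_count_lt Hx Hxy | have := ltn_count_lt Hy Hxy]; lia.
by move=> _ /mapP[y Hy ->]; rewrite ltn0Sn count_lt_size.
Qed.

Lemma pv_take m s i : 0 < i <= m -> pv (take m s) i = pv s i.
Proof. by move=> Hi; rewrite /pv nth_take //; lia. Qed.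

Lemma pv_drop m s i : 0 < i -> pv (drop m s) i = pv s (i + m).
Proof. by move=> Hi; rewrite /pv nth_drop; congr nth; lia. Qed.

Lemma st_take_ltE s m i k : m <= size s -> 0 < i <= m -> 0 < k <= m ->
  (pv (st (take m s)) i < pv (st (take m s)) k) = (pv s i < pv s k).
Proof.
move=> Hm Hi Hk; rewrite st_ltE ?size_take ?pv_take //; case: ifP; size_lia.
Qed.

Lemma st_drop_ltE s m i k : 0 < i <= size s - m -> 0 < k <= size s - m ->
  (pv (st (drop m s)) i < pv (st (drop m s)) k) = (pv s (i + m) < pv s (k + m)).
Proof. by move=> Hi Hk; rewrite st_ltE ?size_drop ?pv_drop //; size_lia. Qed.

Lemma pv_cat s t i : 0 < i ->
  pv (s ++ t) i = if i <= size s then pv s i else pv t (i - size s).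
Proof.
rewrite /pv nth_cat; case: i => [|i] //= _.
by case: ifP => // H; congr nth; size_lia.
Qed.

Lemma pv_pbs s t i : 0 < i ->
  pv (pbs s t) i = if i <= size s then pv s i + size t else pv t (i - size s).
Proof.
move=> Hi; rewrite /pbs pv_cat // size_map; case: ifP => // H.
by rewrite /pv (nth_map 0); [rewrite addnC | size_lia].
Qed.

Lemma pv_pvee s t i : 0 < i ->
  pv (pvee s t) i = if i <= size s then pv s i + size t
                    else if i == (size s).+1 then (size s + size t).+1
                    else pv t (i - (size s).+1).
Proof.
move=> Hi; rewrite /pvee pv_cat // size_map; case: ifP => H.
  by rewrite /pv (nth_map 0); [rewrite addnC | size_lia].
case: eqP => [->|Hne]; first by rewrite /pv subSnn.
rewrite /pv (_ : i - size s = (i - (size s).+1).+1) /=; last size_lia.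
by case E: (i - (size s).+1) => [|m] //=; size_lia.
Qed.

Lemma pvee_is_perm a b s t :
  is_perm a s -> is_perm b t -> is_perm (a + b).+1 (pvee s t).
Proof.
move=> Ps Pt; rewrite /pvee /is_perm (is_perm_size Pt) (is_perm_size Ps).
apply: (@perm_trans _ (t ++ map (addn b) s ++ [:: (a + b).+1])).
  by rewrite -cat_rcons -cats1 perm_catC catA.
have -> : iota 1 (a + b).+1 = iota 1 b ++ map (addn b) (iota 1 a) ++ [:: (a + b).+1].
  rewrite (_ : (a + b).+1 = b + (a + 1)) ?iotaD -?iotaDl; last lia.
  by congr (_ ++ _ ++ _); [congr iota; lia | congr [:: _]; lia].
by rewrite !perm_cat ?perm_map.
Qed.

Lemma st_take_is_perm n s j : is_perm n s -> j <= n -> is_perm j (st (take j s)).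
Proof.
move=> Ps Hj; have := st_is_perm (take_uniq j (is_perm_uniq Ps)).
by rewrite size_take (is_perm_size Ps); case: ltnP => // Hn; rewrite (_ : j = n) //; lia.
Qed.

Lemma st_drop_is_perm n s j : is_perm n s -> is_perm (n - j) (st (drop j s)).
Proof.
move=> Ps; have := st_is_perm (drop_uniq j (is_perm_uniq Ps)).
by rewrite size_drop (is_perm_size Ps).
Qed.

Lemma is_perm0 s : is_perm 0 s -> s = [::].
Proof. by move/is_perm_size/size0nil. Qed.

(** * The maps [gam] and [lam] *)

Lemma size_gam t : size (gam t) = nodes t.
Proof. by elim: t => //= l IHl r IHr; rewrite size_cat /= size_map IHl IHr addnS. Qed.

Lemma gam_is_perm t : is_perm (nodes t) (gam t).
Proof. by elim: t => //= l IHl r IHr; apply: pvee_is_perm. Qed.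

Lemma gam_ltE t i k : 0 < i -> i < k -> k <= nodes t ->
  (pv (gam t) i < pv (gam t) k) = in_lsub t i k.
Proof.
elim: t i k => [|l IHl r IHr] i k /= Hi Hik Hk; first lia.
have Rl := pv_range (gam_is_perm l); have Rr := pv_range (gam_is_perm r).
rewrite in_lsub_node (pv_pvee _ _ Hi) (pv_pvee _ _ (ltn_trans Hi Hik)) !size_gam.
case: (leqP k (nodes l)) => Hkl.
  by rewrite ifT ?ltn_add2r ?IHl //; lia.
case: (ltngtP k (nodes l).+1) => Hkl1; try lia; last first.
  by rewrite ifT ?eqxx; have := Rl i; lia.
have := Rr (k - (nodes l).+1).
case: (ltngtP i (nodes l).+1) => Hil.
- by rewrite ifT; have := Rl i; lia.
- by rewrite ifF ?IHr; lia.
- by rewrite Hil ltnn; lia.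
Qed.

Lemma inv_pair_gam t i k : Defs.inv_pair (gam t) i k =
  [&& 0 < i, i < k, k <= nodes t & ~~ in_lsub t i k].
Proof.
rewrite (inv_pair_perm _ _ (gam_is_perm t)).
case: (ltnP 0 i) => //= Hi; case: (ltnP i k) => //= Hik.
case: (leqP k (nodes t)) => //= Hk.
by rewrite -gam_ltE // (pv_ltNgt (gam_is_perm t) Hi Hik Hk) negbK.
Qed.

Definition seg_max (s : seq nat) (i k : nat) : Prop :=
  forall m, i <= m < k -> pv s m < pv s k.

Lemma seg_max_split n s j i k : is_perm n s -> 0 < j <= n -> pv s j = n ->
  0 < i < k -> k <= n ->
  seg_max s i k <->
  [\/ k < j /\ seg_max (st (take j.-1 s)) i k,
      k = j |
      j < i /\ seg_max (st (drop j s)) (i - j) (k - j)].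
Proof.
move=> Ps Hj Pj Hik Hk; have Ss := is_perm_size Ps.
have Rs := pv_range Ps.
have lt_max : forall m, 0 < m <= n -> m != j -> pv s m < n.
  move=> m Hm Hmj; have := Rs m Hm; suff : pv s m != pv s j by rewrite Pj; lia.
  apply: contra Hmj => /eqP E; apply/eqP.
  by apply: (pv_inj (is_perm_uniq Ps)) _ _ E; rewrite Ss; lia.
case: (ltngtP k j) => Hkj.
- have E : forall m, i <= m < k ->
      (pv (st (take j.-1 s)) m < pv (st (take j.-1 s)) k) = (pv s m < pv s k).
    by move=> m Hm; rewrite st_take_ltE ?Ss //; lia.
  split=> [Hmax|]; first by constructor 1; split=> // m Hm; rewrite E // Hmax.
  by case=> [[_ Hmax] m Hm|Ekj m Hm|[Hji _] m Hm]; [rewrite -E ?Hmax | lia | lia].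
- have E : forall m, i <= m < k -> j < i ->
      (pv (st (drop j s)) (m - j) < pv (st (drop j s)) (k - j)) = (pv s m < pv s k).
    by move=> m Hm Hji; rewrite st_drop_ltE ?Ss ?subnK //; lia.
  split=> [Hmax|].
    case: (ltnP j i) => Hji.
      constructor 3; split=> // m Hm.
      by have := E (m + j) ltac:(lia) Hji; rewrite addnK => ->; apply: Hmax; lia.
    by have := Hmax j ltac:(lia); rewrite Pj; have := Rs k ltac:(lia); lia.
  case=> [[Hkj' _]|Ekj|[Hji Hmax]] m Hm; try lia.
  by rewrite -E //; apply: Hmax; lia.
- split=> [_|_ m Hm]; first by constructor 2.
  by rewrite Hkj Pj; apply: lt_max; lia.
Qed.

Definition lam_spec (n : nat) (s : seq nat) (t : tree) : Prop :=
  nodes t = n /\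
  forall i k, in_lsub t i k <-> [/\ 0 < i, i < k, k <= n & seg_max s i k].

Lemma lam_spec_leaf s : lam_spec 0 s Leaf.
Proof. by split=> // i k; rewrite /in_lsub /=; split=> [|[]]; lia. Qed.

Lemma lam_f_spec f n s : is_perm n s -> n <= f -> lam_spec n s (lam_f f s).
Proof.
elim: f n s => [|f IH] n s Ps Hf.
  by move: Hf; rewrite leqn0 => /eqP ->; apply: lam_spec_leaf.
case: n Ps Hf => [|n] Ps Hf; first by rewrite (is_perm0 Ps); apply: lam_spec_leaf.
have Ss := is_perm_size Ps.
set j := (index n.+1 s).+1.
have Hmem : n.+1 \in s by rewrite (is_perm_mem _ Ps) leqnn.
have Hj : 0 < j <= n.+1 by have := index_mem n.+1 s; rewrite Hmem Ss; size_lia.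
have Pj : pv s j = n.+1 by rewrite /pv /j /= nth_index.
have -> : lam_f f.+1 s = Node (lam_f f (st (take j.-1 s))) (lam_f f (st (drop j s))).
  by case: s Ps Ss {Hmem Hj Pj} @j => // x s' _ /= ->.
have [nA HA] := IH _ _ (@st_take_is_perm _ _ j.-1 Ps ltac:(lia)) ltac:(lia).
have [nB HB] := IH _ _ (st_drop_is_perm j Ps) ltac:(lia).
split=> [/=|i k]; first by rewrite nA nB; lia.
rewrite in_lsub_node nA (_ : j.-1.+1 = j); last lia.
split.
  case/or3P => [/andP[Hk /HA [H1 H2 H3 Hm]] | /andP[/eqP Ek H]
              | /andP[Hji /HB [H1 H2 H3 Hm]]].
  - split; try lia; apply/(seg_max_split Ps Hj Pj); try lia.
    by constructor 1; split=> //; lia.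
  - by split; try lia; apply/(seg_max_split Ps Hj Pj); try lia; constructor 2.
  - split; try lia; apply/(seg_max_split Ps Hj Pj); try lia.
    by constructor 3; split=> //; lia.
case=> H1 H2 H3 Hm.
have [[Hkj Hm']|Ekj|[Hji Hm']] := (@seg_max_split _ _ _ i k Ps Hj Pj ltac:(lia) H3).1 Hm;
  apply/or3P.
- by constructor 1; apply/andP; split; [lia | apply/HA; split=> //; lia].
- by constructor 2; apply/andP; split; [apply/eqP | lia].
- by constructor 3; apply/andP; split=> //; apply/HB; split=> //; lia.
Qed.

Lemma lam_spec_lam n s : is_perm n s -> lam_spec n s (lam s).
Proof. by move=> Ps; rewrite /lam (is_perm_size Ps); apply: lam_f_spec. Qed.

(** * Global descents and [rho] *)

Lemma decideP (P : Prop) : decide P <-> P.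
Proof. by rewrite /decide; case: excluded_middle_informative. Qed.

Lemma mem_take_pv p s x : x \in take p s ->
  exists2 a, 0 < a <= minn p (size s) & pv s a = x.
Proof.
case/(nthP 0) => i; rewrite size_take_min => Hi <-.
by exists i.+1; rewrite /pv ?nth_take //=; lia.
Qed.

Lemma mem_drop_pv p s y : y \in drop p s -> exists2 k, p < k <= size s & pv s k = y.
Proof.
case/(nthP 0) => i; rewrite size_drop => Hi <-.
by exists (p + i).+1; rewrite /pv ?nth_drop //=; size_lia.
Qed.

Definition global_descent (n : nat) (s : seq nat) (p : nat) : Prop :=
  0 < p < n /\ forall a b, 0 < a <= p -> p < b <= n -> pv s b < pv s a.

(* Pigeonhole: the [p] distinct entries in front exceed the [n - p] behind. *)
Lemma global_descent_values n s p : is_perm n s -> global_descent n s p ->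
  {in take p s, forall x, n - p < x <= n} /\ {in drop p s, forall y, 0 < y <= n - p}.
Proof.
move=> Ps [Hp Hdes]; have Ss := is_perm_size Ps; have Us := is_perm_uniq Ps.
have Rs := pv_range Ps.
split=> [x /[dup] Hx /mem_take_pv [a Ha Ex] | y /[dup] Hy /mem_drop_pv [k Hk Ey]].
  have : size (drop p s) <= size (iota 1 x.-1).
    apply: uniq_leq_size; first exact: drop_uniq.
    move=> y /mem_drop_pv [k Hk <-]; rewrite mem_iota.
    have := Hdes a k ltac:(size_lia) ltac:(size_lia).
    by have := Rs k ltac:(size_lia); size_lia.
  by rewrite size_drop size_iota -Ex; have := Rs a ltac:(size_lia); size_lia.
have : size (take p s) <= size (iota y.+1 (n - y)).
  apply: uniq_leq_size; first exact: take_uniq.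
  move=> x /mem_take_pv [a Ha <-]; rewrite mem_iota.
  have := Hdes a k ltac:(size_lia) ltac:(size_lia).
  by have := Rs a ltac:(size_lia); size_lia.
by rewrite size_take size_iota -Ey; have := Rs k ltac:(size_lia); case: ifP; size_lia.
Qed.

Lemma GDesP n s p : is_perm n s -> GDes s p <-> global_descent n s p.
Proof.
move=> Ps; have Ss := is_perm_size Ps; rewrite /GDes Ss; split.
  case/andP => Hp /decideP [a [b [Pa [Pb Es]]]]; split=> // x y Hx Hy.
  rewrite Es !pv_pbs ?(is_perm_size Pa) ?(is_perm_size Pb); try lia.
  rewrite ifF ?ifT; try lia.
  have := @pv_range _ _ x Pa ltac:(lia).
  by have := @pv_range _ _ (y - p) Pb ltac:(lia); lia.
move=> /[dup] Hdes [Hp _]; rewrite Hp; apply/decideP.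
have [Htake Hdrop] := global_descent_values Ps Hdes.
have Us := is_perm_uniq Ps.
exists (map (subn^~ (n - p)) (take p s)), (drop p s); split; [|split].
- apply: uniq_is_perm.
  + rewrite map_inj_in_uniq ?take_uniq // => x y Hx Hy /=.
    by have := Htake _ Hx; have := Htake _ Hy; lia.
  + by rewrite size_map size_take Ss; case: ifP; lia.
  + by move=> _ /mapP [x Hx ->]; have := Htake _ Hx; lia.
- apply: uniq_is_perm => [||y /Hdrop //]; first exact: drop_uniq.
  by rewrite size_drop Ss.
- rewrite /pbs size_drop Ss -map_comp map_id_in ?cat_take_drop // => x Hx /=.
  by have := Htake _ Hx; lia.
Qed.

Lemma head_filter_iota (P : pred nat) a m :
  let j := head (a + m) [seq p <- iota a m | P p] in
  [/\ a <= j <= a + m, j < a + m -> P j & forall p, a <= p < j -> ~~ P p].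
Proof.
elim: m a => [|m IH] a /=; first by rewrite addn0; split=> [||p]; lia.
case: ifP => Pa /=; first by split=> [||p] //; lia.
have [Hj Pj Hfirst] := IH a.+1; rewrite addSnnS in Hj Pj Hfirst.
split=> [||p Hp] //; first lia.
by case: (ltngtP a p) => Hap; [apply: Hfirst; lia | lia | rewrite -Hap Pa].
Qed.

Lemma not_global_descent n s p : 0 < p < n -> ~ global_descent n s p ->
  exists a b, [/\ 0 < a <= p, p < b <= n & pv s a <= pv s b].
Proof.
move=> Hp Hndes; apply: NNPP => Hno; apply: Hndes; split=> // a b Ha Hb.
by rewrite ltnNge; apply/negP => Hab; apply: Hno; exists a, b.
Qed.

(* The witness is [lam] of the standardised window [a+1 .. b] of [gam t]. *)
Lemma in_lsub_restrict t a b : a <= b <= nodes t -> exists T, nodes T = b - a /\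
  forall i k, in_lsub T i k <-> [/\ 0 < i, k <= b - a & in_lsub t (i + a) (k + a)].
Proof.
move=> Hab; set w := take (b - a) (drop a (gam t)).
have Sw : size w = b - a by rewrite size_take size_drop size_gam; case: ifP; lia.
have Pw : is_perm (b - a) (st w).
  by rewrite -Sw; apply/st_is_perm/take_uniq/drop_uniq/is_perm_uniq/gam_is_perm.
have [nT HT] := lam_spec_lam Pw.
have Ew : forall m k, 0 < m < k -> k <= b - a ->
    (pv (st w) m < pv (st w) k) = in_lsub t (m + a) (k + a).
  move=> m k Hm Hk; rewrite st_ltE ?Sw ?pv_take ?pv_drop; try lia.
  by rewrite gam_ltE //; lia.
exists (lam (st w)); split=> // i k; rewrite HT.
split=> [[Hi Hik Hk Hmax]|[Hi Hk Ht]].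
  by split=> //; rewrite -Ew ?Hmax //; lia.
have := in_lsub_range Ht => Hr.
split=> //; try lia; move=> m Hm; rewrite Ew; try lia.
by apply: in_lsub_narrow Ht _; lia.
Qed.

Definition ninv_lsub (n : nat) (s : seq nat) (t : tree) : Prop :=
  forall i k, 0 < i -> i < k -> k <= n -> pv s i < pv s k -> in_lsub t i k.

Definition rho_spec (n : nat) (s : seq nat) (t : tree) : Prop :=
  [/\ nodes t = n, ninv_lsub n s t &
      forall t', nodes t' = n -> ninv_lsub n s t' ->
        forall i k, in_lsub t i k -> in_lsub t' i k].

Lemma rho_spec_leaf s : rho_spec 0 s Leaf.
Proof. by split=> // [i k|t' _ _ i k]; rewrite /in_lsub /=; lia. Qed.

(* As [i] is no global descent, some non-inversion [(a, b)] has [a <= i < b];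
   the descent at [j] forces [b <= j], and we recurse from [b]. *)
Lemma ninv_lsub_first_gdes n s t j : is_perm n s -> j <= n ->
  (j < n -> global_descent n s j) -> (forall p, 0 < p < j -> ~ global_descent n s p) ->
  ninv_lsub n s t -> forall i, 0 < i < j -> in_lsub t i j.
Proof.
move=> Ps Hj Hdes Hfirst Ht i; move Hd: (j - i) => d.
elim/ltn_ind: d i Hd => d IH i Hd Hi.
have [a [b [Ha Hb Hab]]] := not_global_descent (ltac:(lia) : 0 < i < n) (Hfirst i Hi).
have {}Hab : pv s a < pv s b.
  by rewrite (pv_ltNgt Ps) -?leqNgt; try lia.
have Hbj : b <= j.
  by rewrite leqNgt; apply/negP => Hbj; have [_ /(_ a b)] := Hdes ltac:(lia); lia.
have Hab_lsub := Ht a b ltac:(lia) ltac:(lia) ltac:(lia) Hab.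
case: (ltngtP b j) => Hbj'; try lia.
  have Hb_lsub := IH (j - b) ltac:(lia) b erefl ltac:(lia).
  by apply: in_lsub_narrow (in_lsub_trans Hab_lsub Hb_lsub) _; lia.
by rewrite Hbj' in Hab_lsub; apply: in_lsub_narrow Hab_lsub _; lia.
Qed.

Section SplitAtGlobalDescent.

Variables (n : nat) (s : seq nat) (j : nat).
Hypotheses (Ps : is_perm n s) (Hj : 0 < j <= n).

Lemma left_part_ltE i k : 0 < i <= j.-1 -> 0 < k <= j.-1 ->
  (pv (st (take j.-1 s)) i < pv (st (take j.-1 s)) k) = (pv s i < pv s k).
Proof. by move=> Hi Hk; rewrite st_take_ltE ?(is_perm_size Ps) //; lia. Qed.

Lemma right_part_ltE i k : 0 < i <= n - j -> 0 < k <= n - j ->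
  (pv (st (drop j s)) i < pv (st (drop j s)) k) = (pv s (i + j) < pv s (k + j)).
Proof. by move=> Hi Hk; rewrite st_drop_ltE ?(is_perm_size Ps). Qed.

Lemma ninv_lsub_node A B : (j < n -> global_descent n s j) -> nodes A = j.-1 ->
  ninv_lsub j.-1 (st (take j.-1 s)) A -> ninv_lsub (n - j) (st (drop j s)) B ->
  ninv_lsub n s (Node A B).
Proof.
move=> Hdes nA HA HB i k Hi Hik Hk Hlt.
rewrite in_lsub_node nA (_ : j.-1.+1 = j); last lia.
apply/or3P; case: (ltngtP k j) => Hkj; last by constructor 2; lia.
  by constructor 1; rewrite (_ : k <= j.-1) ?HA ?left_part_ltE //; lia.
have Hji : j < i.
  rewrite ltnNge; apply/negP => Hij.
  by have [_ /(_ i k)] := Hdes ltac:(lia); lia.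
constructor 3; rewrite Hji HB ?right_part_ltE ?subnK //; lia.
Qed.

Lemma ninv_lsub_restrict_left t : nodes t = n -> ninv_lsub n s t ->
  exists2 T, nodes T = j.-1 /\ ninv_lsub j.-1 (st (take j.-1 s)) T &
    forall i k, in_lsub T i k -> in_lsub t i k.
Proof.
move=> nt Ht; have [T [nT HT]] := @in_lsub_restrict t 0 j.-1 ltac:(lia).
exists T => [|i k /HT [_ _]]; last by rewrite !addn0.
split; first by rewrite nT subn0.
move=> i k Hi Hik Hk; rewrite left_part_ltE; try lia.
move=> Hlt; apply/HT; rewrite !addn0; split=> //; first lia.
by apply: (Ht _ _ _ _ _ Hlt); lia.
Qed.

Lemma ninv_lsub_restrict_right t : nodes t = n -> ninv_lsub n s t ->
  exists2 T, nodes T = n - j /\ ninv_lsub (n - j) (st (drop j s)) T &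
    forall i k, in_lsub T i k -> in_lsub t (i + j) (k + j).
Proof.
move=> nt Ht; have [T [nT HT]] := @in_lsub_restrict t j n ltac:(lia).
exists T => [|i k /HT [] //]; split=> // i k Hi Hik Hk.
rewrite right_part_ltE; try lia.
by move=> Hlt; apply/HT; split=> //; apply: (Ht _ _ _ _ _ Hlt); lia.
Qed.

End SplitAtGlobalDescent.

Lemma rho_f_spec f n s : is_perm n s -> n <= f -> rho_spec n s (rho_f f s).
Proof.
elim: f n s => [|f IH] n s Ps Hf.
  by move: Hf; rewrite leqn0 => /eqP ->; apply: rho_spec_leaf.
case: n Ps Hf => [|n] Ps Hf; first by rewrite (is_perm0 Ps); apply: rho_spec_leaf.
have Ss := is_perm_size Ps.
set j := head n.+1 [seq p <- iota 1 n | GDes s p].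
have [Hj Hdes Hfirst] : [/\ 0 < j <= n.+1, j < n.+1 -> global_descent n.+1 s j &
                          forall p, 0 < p < j -> ~ global_descent n.+1 s p].
  have [] := head_filter_iota (GDes s) 1 n; rewrite -/j add1n => H1 H2 H3.
  split=> [|/H2/(GDesP _ Ps) //|p Hp /(GDesP _ Ps) Hg]; first lia.
  by have := H3 p ltac:(lia); rewrite Hg.
have -> : rho_f f.+1 s = Node (rho_f f (st (take j.-1 s))) (rho_f f (st (drop j s))).
  by case: s Ps Ss {Hj Hdes Hfirst} @j => // x s' _ /= [->].
have [nA HA1 HA2] := IH _ _ (@st_take_is_perm _ _ j.-1 Ps ltac:(lia)) ltac:(lia).
have [nB HB1 HB2] := IH _ _ (st_drop_is_perm j Ps) ltac:(lia).
split=> [/=||t' nt' Ht' i k]; first by rewrite nA nB; lia.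
  exact: (ninv_lsub_node Ps Hj Hdes nA HA1 HB1).
rewrite in_lsub_node nA (_ : j.-1.+1 = j); last lia.
case/or3P => [/andP[_ Hik] | /andP[/eqP -> Hik] | /andP[Hji Hik]].
- have [T [nT HT] HTt'] := ninv_lsub_restrict_left Ps Hj nt' Ht'.
  exact/HTt'/(HA2 T nT HT).
- by apply: (ninv_lsub_first_gdes Ps _ Hdes Hfirst Ht'); lia.
- have [T [nT HT] HTt'] := ninv_lsub_restrict_right Ps Hj nt' Ht'.
  have := HTt' _ _ (HB2 T nT HT _ _ Hik); have := in_lsub_range Hik => Hr.
  by rewrite !subnK //; lia.
Qed.

Lemma rho_spec_rho n s : is_perm n s -> rho_spec n s (rho s).
Proof. by move=> Ps; rewrite /rho (is_perm_size Ps); apply: rho_f_spec. Qed.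

(** * The maps [C], [Z], [L] and [R] *)

Lemma pvee_pbs a b c : pvee a (pbs b c) = pbs (pvee a b) c.
Proof.
rewrite /pvee /pbs !size_cat /= !size_map map_cat /= -catA /= -map_comp.
rewrite (_ : (size a + (size b + size c)).+1 = size c + (size a + size b).+1); last lia.
by congr (_ ++ _); apply: eq_map => x /=; lia.
Qed.

Lemma gam_tbs s t : gam (tbs s t) = pbs (gam s) (gam t).
Proof. by elim: s => [|l _ r IH] //=; rewrite IH pvee_pbs. Qed.

Lemma gam_one k : gam (Defs.one k) = pid k.
Proof.
elim: k => //= k ->; rewrite /pvee /pid size_iota map_id_in //= addn0.
by rewrite -[1 :: _]/(iota 1 k.+1) -[k.+1 in RHS]addn1 iotaD add1n.
Qed.

Lemma gam_Cmap n S : gam (Cmap n S) = Zmap n S.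
Proof.
by rewrite /Cmap /Zmap; elim: (blocks n S) => //= k bs IH; rewrite gam_tbs IH gam_one.
Qed.

Lemma lsize_tbs s t k : 0 < k ->
  lsize (tbs s t) k = if k <= nodes s then lsize s k else lsize t (k - nodes s).
Proof.
move=> Hk; rewrite /lsize lsizes_tbs nth_cat size_lsizes.
by case: ifP => H; [rewrite ifT | rewrite ifF ?predn_sub]; lia.
Qed.

Lemma lsize_one m k : 0 < k <= m -> lsize (Defs.one m) k = k.-1.
Proof. by move=> Hk; rewrite /lsize lsizes_one nth_iota //; lia. Qed.

Lemma in_lsub_tbs_one m t i k : in_lsub (tbs (Defs.one m) t) i k =
  ((k <= m) && (0 < i < k)) || ((m < i) && in_lsub t (i - m) (k - m)).
Proof.
rewrite /in_lsub nodes_tbs nodes_one; have := lsize_le t (k - m).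
case: (posnP k) => [->|Hk]; first lia.
by rewrite lsize_tbs // nodes_one; case: (leqP k m) => Hkm; rewrite ?lsize_one; lia.
Qed.

(* [Cmap n S] is [comb 0 L] for the increasing list [L] of the elements of [S]
   followed by [n]. *)
Definition comb (x0 : nat) (L : seq nat) : tree :=
  foldr (fun k acc => tbs (Defs.one k) acc) Leaf (pairmap (fun a b => b - a) x0 L).

Lemma comb_spec x0 L : path ltn x0 L -> nodes (comb x0 L) = last x0 L - x0 /\
  forall i k, in_lsub (comb x0 L) i k <->
    [/\ 0 < i, i < k, k <= last x0 L - x0 &
        forall p, p \in L -> ~ (i + x0 <= p < k + x0)].
Proof.
elim: L x0 => [|p L IH] x0 /=.
  by rewrite subnn; split=> // i k; rewrite /in_lsub /=; split=> [|[]]; lia.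
case/andP=> Hp /[dup] HL /IH [nC HC].
have /allP Hmin := order_path_min ltn_trans HL.
have Hlast : p <= last p L.
  by have := mem_last p L; rewrite inE => /orP[/eqP ->|/Hmin /=]; lia.
split=> [|i k]; first by rewrite nodes_tbs nodes_one nC; lia.
rewrite [comb _ _]/= -/(comb p L) in_lsub_tbs_one; split.
  case/orP=> [Hik | /andP[Hpi /HC [H1 H2 H3 H4]]].
    by split; try lia; move=> q; rewrite inE => /orP[/eqP ->|/Hmin /=]; lia.
  by split; try lia; move=> q; rewrite inE => /orP[/eqP ->|/H4]; lia.
case=> Hi Hik Hk Hnot; apply/orP.
case: (leqP k (p - x0)) => Hkp; [left | right]; first by lia.
have Hpi : p - x0 < i.
  by rewrite ltnNge; apply/negP => Hip; apply: (Hnot p); rewrite ?inE ?eqxx //; lia.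
rewrite Hpi; apply/HC; split; try lia.
by move=> q Hq; have := Hnot q; rewrite inE Hq orbT; lia.
Qed.

Lemma Cmap_spec n S : qset n S -> nodes (Cmap n S) = n /\
  forall i k, in_lsub (Cmap n S) i k <->
    [/\ 0 < i, i < k, k <= n & forall m, i <= m < k -> ~~ S m].
Proof.
case: n => [|n] HS; first by split=> // i k; rewrite /in_lsub /=; split=> [|[]]; lia.
set L := rcons [seq i <- iota 1 n | S i] n.+1.
have HL : path ltn 0 L.
  apply: (@subseq_path _ _ ltn_trans 0 L (iota 1 n.+1) _ (iota_ltn_sorted 0 n.+2)).
  have -> : iota 1 n.+1 = iota 1 n ++ [:: n.+1] by rewrite -[n.+1 in LHS]addn1 iotaD.
  rewrite /L -cats1.
  by apply: cat_subseq; [apply: filter_subseq | apply: subseq_refl].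
have [nC HC] := comb_spec HL; rewrite /L last_rcons subn0 in nC HC.
split=> // i k; rewrite [Cmap _ _]/(comb 0 L) HC; split=> -[Hi Hik Hk Hnot].
  split=> // m Hm; apply/negP => Sm; apply: (Hnot m); last lia.
  by rewrite mem_rcons inE mem_filter Sm mem_iota; have := HS m Sm; lia.
split=> // p; rewrite mem_rcons inE mem_filter => /orP[/eqP ->|/andP[Sp _]]; first lia.
by move=> Hp; have := Hnot p; rewrite Sp; lia.
Qed.

Lemma size_leafdirs t b : size (leafdirs t b) = (nodes t).+1.
Proof. by elim: t b => //= l IHl r IHr b; rewrite size_cat IHl IHr addSn addnS. Qed.

Lemma nth_leafdirs t b :
  (forall i, i < nodes t -> nth false (leafdirs t b) i = (lsize t i.+1 == 0)) /\
  nth false (leafdirs t b) (nodes t) = (if t is Leaf then b else false).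
Proof.
elim: t b => [|l IHl r IHr] b //=.
have [Hl1 Hl2] := IHl true; have [Hr1 Hr2] := IHr false.
rewrite nth_cat size_leafdirs ifF; last lia.
rewrite (_ : (nodes l + nodes r).+1 - (nodes l).+1 = nodes r); last lia.
split=> [i Hi|]; last by rewrite Hr2; case: (r).
rewrite nth_cat size_leafdirs; case: (ltngtP i (nodes l)) => Hil.
- by rewrite ifT ?Hl1 ?lsize_l //; lia.
- rewrite ifF ?Hr1 ?lsize_r; try lia.
  by rewrite (_ : i.+1 - (nodes l).+1 = (i - (nodes l).+1).+1) //; lia.
- by rewrite Hil ifT // Hl2 lsize_root; case: (l).
Qed.

Lemma LmapE t i : Lmap t i = (0 < i < nodes t) && ~~ in_lsub t i i.+1.
Proof.
rewrite /Lmap; case: (ltnP 0 i) => Hi //=; case: (ltnP i (nodes t)) => Hn //=.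
rewrite (nth_leafdirs t false).1 // /in_lsub; have := lsize_le t i.+1.
by case: (lsize t i.+1) => [|m] /=; lia.
Qed.

Lemma RmapP t q :
  Rmap t q <-> 0 < q < nodes t /\ forall i k, i <= q < k -> ~~ in_lsub t i k.
Proof.
rewrite /Rmap; split.
  case/andP => Hq /decideP [r [r' [Er Et]]]; split=> // i k Hik.
  rewrite Et /in_lsub nodes_tbs lsize_tbs; last lia.
  by rewrite ifF; have := lsize_le r' (k - nodes r); lia.
move=> [Hq H]; rewrite Hq; apply/decideP.
elim: t q Hq H => [|l _ r IHr] q /= Hq H; first lia.
case: (ltngtP q (nodes l).+1) => Hql.
- by have := H q (nodes l).+1 ltac:(lia); rewrite in_lsub_node eqxx; lia.
- have Hq' : 0 < q - (nodes l).+1 < nodes r by lia.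
  have [|r1 [r' [E1 E2]]] := IHr _ Hq'.
    move=> i k Hik; case: (posnP i) => [->|Hi]; first by rewrite /in_lsub.
    have := H (i + (nodes l).+1) (k + (nodes l).+1) ltac:(lia).
    by rewrite in_lsub_node !addnK; apply: contra => ->; lia.
  by exists (Node l r1), r'; rewrite /= E1 -E2; split=> //; lia.
- by exists (Node l Leaf), r; rewrite Hql /= addn0.
Qed.

Lemma inv_pair_Zmap n S i k : qset n S ->
  Defs.inv_pair (Zmap n S) i k <->
  [/\ 0 < i, i < k, k <= n & exists2 m, i <= m < k & S m].
Proof.
move=> HS; have [nC HC] := Cmap_spec HS.
rewrite -gam_Cmap inv_pair_gam nC; split.
  case/and4P => Hi Hik Hk Hnot; split=> //; apply: NNPP => Hno.
  move/negP: Hnot; apply; apply/HC; split=> // m Hm.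
  by apply/negP => Sm; apply: Hno; exists m.
move=> [Hi Hik Hk [m Hm Sm]]; rewrite Hi Hik Hk; apply/negP => /HC [_ _ _ /(_ m Hm)].
by rewrite Sm.
Qed.

(** * Galois connections *)

Lemma lam_gam_galois n s t : is_perm n s -> nodes t = n ->
  tam_le (lam s) t <-> weak_le s (gam t).
Proof.
move=> Ps nt; have [nl Hl] := lam_spec_lam Ps.
rewrite tam_le_lsub ?nl ?nt //; split=> [Hlt i k|Hw i k Ht].
  rewrite (inv_pair_perm _ _ Ps) inv_pair_gam nt => /and4P[Hi Hik Hk Hinv].
  rewrite Hi Hik Hk /=; apply/negP => /Hlt /Hl [_ _ _ /(_ i)].
  by rewrite leqnn Hik => /(_ isT); lia.
have [Hi Hik Hk] := and3P (in_lsub_range Ht).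
apply/Hl; split=> // [|m Hm]; first by rewrite -nt.
rewrite (pv_ltNgt Ps) -?nt; try lia; apply/negP => Hlt.
have /Hw : Defs.inv_pair s m k.
  by rewrite (inv_pair_perm _ _ Ps) Hlt andbT -nt; apply/and3P; split; lia.
by rewrite inv_pair_gam (in_lsub_narrow Ht Hm) !andbF.
Qed.

Lemma gam_rho_galois n t s : nodes t = n -> is_perm n s ->
  weak_le (gam t) s <-> tam_le t (rho s).
Proof.
move=> nt Ps; have [nr Hr Hmin] := rho_spec_rho Ps.
rewrite tam_le_lsub ?nr ?nt //; split=> [Hw|Hlsub i k].
  apply: Hmin => // i k Hi Hik Hk Hlt; apply/negPn/negP => Hnot.
  have /Hw : Defs.inv_pair (gam t) i k by rewrite inv_pair_gam nt Hi Hik Hk.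
  by rewrite (inv_pair_perm _ _ Ps) Hi Hik Hk /=; lia.
rewrite (inv_pair_perm _ _ Ps) inv_pair_gam nt => /and4P[Hi Hik Hk Hnot].
rewrite Hi Hik Hk /= -(negbK (_ < _)) -(pv_ltNgt Ps) //.
by apply: contra Hnot => Hlt; apply/Hlsub/Hr.
Qed.

Lemma Lmap_Cmap_galois n t S : nodes t = n -> qset n S ->
  subq (Lmap t) S <-> tam_le t (Cmap n S).
Proof.
move=> nt HS; have [nC HC] := Cmap_spec HS.
rewrite tam_le_lsub ?nC ?nt //; split=> [HL i k /HC [Hi Hik Hk Hnot]|Hlsub i].
  apply: in_lsub_chain => // m Hm; apply/negPn/negP => Hm'.
  by move: (Hnot m Hm); rewrite HL // LmapE Hm' andbT nt; lia.
rewrite LmapE nt => /andP[Hi Hnot]; apply/negPn/negP => Si.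
move/negP: Hnot; apply; apply/Hlsub/HC; split=> [|||m Hm]; try lia.
by rewrite (_ : m = i) //; lia.
Qed.

Lemma Cmap_Rmap_galois n S t : qset n S -> nodes t = n ->
  tam_le (Cmap n S) t <-> subq S (Rmap t).
Proof.
move=> HS nt; have [nC HC] := Cmap_spec HS.
rewrite tam_le_lsub ?nC ?nt //; split=> [Hlsub q Sq|HR i k Ht].
  apply/RmapP; split=> [|i k Hik]; first by rewrite nt; apply: HS.
  by apply/negP => /Hlsub /HC [_ _ _ /(_ q Hik)]; rewrite Sq.
have [Hi Hik Hk] := and3P (in_lsub_range Ht).
apply/HC; split=> // [|m Hm]; first by rewrite -nt.
by apply/negP => /HR /RmapP [_ /(_ i k Hm)]; rewrite Ht.
Qed.

Lemma Des_Zmap_galois n s S : is_perm n s -> qset n S ->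
  subq (Des s) S <-> weak_le s (Zmap n S).
Proof.
move=> Ps HS; split=> [HD i k|Hw i].
  rewrite (inv_pair_perm _ _ Ps) => /and4P[Hi Hik Hk Hlt].
  apply/(inv_pair_Zmap _ _ HS); split=> //.
  have [m Hm Hdes] := descent_between Hik Hlt.
  by exists m => //; apply: HD; rewrite /Des (is_perm_size Ps) Hdes andbT; lia.
rewrite /Des (is_perm_size Ps) => /andP[Hi Hdes].
have /Hw/(inv_pair_Zmap _ _ HS) [_ _ _ [m Hm Sm]] : Defs.inv_pair s i i.+1.
  by rewrite (inv_pair_perm _ _ Ps) Hdes andbT; lia.
by rewrite (_ : i = m) //; lia.
Qed.

Lemma Zmap_GDes_galois n S s : qset n S -> is_perm n s ->
  weak_le (Zmap n S) s <-> subq S (GDes s).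
Proof.
move=> HS Ps; split=> [Hw q Sq|HG i k /(inv_pair_Zmap _ _ HS) [Hi Hik Hk [m Hm Sm]]].
  apply/(GDesP _ Ps); split=> [|a b Ha Hb]; first exact: HS.
  have /Hw : Defs.inv_pair (Zmap n S) a b.
    by apply/(inv_pair_Zmap _ _ HS); split; try lia; exists q => //; lia.
  by rewrite (inv_pair_perm _ _ Ps) => /and4P[].
have /(GDesP _ Ps) [_ Hdes] := HG m Sm.
by rewrite (inv_pair_perm _ _ Ps) Hi Hik Hk /=; apply: Hdes; lia.
Qed.

Lemma Lmap_lam n s : is_perm n s -> Lmap (lam s) =1 Des s.
Proof.
move=> Ps i; have [nl Hl] := lam_spec_lam Ps.
rewrite LmapE /Des nl (is_perm_size Ps).
case: (ltnP 0 i) => Hi //=; case: (ltnP i n) => Hn //=.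
have -> : in_lsub (lam s) i i.+1 = (pv s i < pv s i.+1).
  apply/idP/idP => [/Hl [_ _ _ /(_ i)]|Hlt]; first by apply; lia.
  by apply/Hl; split=> // m Hm; rewrite (_ : m = i) //; lia.
by rewrite (pv_ltNgt Ps) ?negbK.
Qed.

Lemma Rmap_rho n s : is_perm n s -> Rmap (rho s) =1 GDes s.
Proof.
move=> Ps q; have [nr _ _] := rho_spec_rho Ps.
case: (boolP (0 < q < n)) => Hq; last first.
  by rewrite /Rmap /GDes nr (is_perm_size Ps) (negbTE Hq).
have HS : qset n (pred1 q) by move=> i /eqP ->.
have [nC _] := Cmap_spec HS.
have subq1 (T : nat -> bool) : subq (pred1 q) T <-> T q.
  by split=> [|Tq i /eqP -> //]; apply; rewrite /= eqxx.
have E : Rmap (rho s) q <-> GDes s q.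
  rewrite -!subq1 -(Cmap_Rmap_galois HS nr) -(gam_rho_galois nC Ps) gam_Cmap.
  exact: Zmap_GDes_galois.
by apply/idP/idP => /E.
Qed.

Section GaloisConnection.

Variables (A B : Type) (PA : A -> Prop) (PB : B -> Prop).
Variables (leA : A -> A -> Prop) (leB : B -> B -> Prop) (f : A -> B) (g : B -> A).
Hypothesis fg_galois : forall a b, PA a -> PB b -> (leB (f a) b <-> leA a (g b)).

Lemma galois_homo_left : (forall a, PA a -> PB (f a)) -> (forall b, leB b b) ->
  (forall x y z, leA x y -> leA y z -> leA x z) ->
  forall a a', PA a -> PA a' -> leA a a' -> leB (f a) (f a').
Proof.
move=> fP leBB leA_trans a a' Pa Pa' Haa'; apply/(fg_galois Pa (fP _ Pa')).
by apply: leA_trans Haa' _; apply/(fg_galois Pa' (fP _ Pa')).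
Qed.

Lemma galois_homo_right : (forall b, PB b -> PA (g b)) -> (forall a, leA a a) ->
  (forall x y z, leB x y -> leB y z -> leB x z) ->
  forall b b', PB b -> PB b' -> leB b b' -> leA (g b) (g b').
Proof.
move=> gP leAA leB_trans b b' Pb Pb' Hbb'; apply/(fg_galois (gP _ Pb) Pb').
by apply: leB_trans _ Hbb'; apply/(fg_galois (gP _ Pb) Pb).
Qed.

End GaloisConnection.

Lemma tam_le_refl t : tam_le t t.
Proof. exact: tam_refl. Qed.

Lemma subq_refl S : subq S S.
Proof. by []. Qed.

Lemma subq_trans S T U : subq S T -> subq T U -> subq S U.
Proof. by move=> HST HTU i /HST /HTU. Qed.

Lemma nodes_lam n s : is_perm n s -> nodes (lam s) = n.
Proof. by case/lam_spec_lam. Qed.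

Lemma nodes_rho n s : is_perm n s -> nodes (rho s) = n.
Proof. by case/rho_spec_rho. Qed.

Lemma nodes_Cmap n S : qset n S -> nodes (Cmap n S) = n.
Proof. by case/Cmap_spec. Qed.

Lemma gam_is_perm_nodes n t : nodes t = n -> is_perm n (gam t).
Proof. by move=> <-; apply: gam_is_perm. Qed.

Lemma Zmap_is_perm n S : qset n S -> is_perm n (Zmap n S).
Proof. by move=> HS; rewrite -gam_Cmap; apply/gam_is_perm_nodes/nodes_Cmap. Qed.

Lemma qset_Lmap n t : nodes t = n -> qset n (Lmap t).
Proof. by move=> <- i /andP[]. Qed.

Lemma qset_Rmap n t : nodes t = n -> qset n (Rmap t).
Proof. by move=> <- i /andP[]. Qed.

Lemma qset_Des n s : is_perm n s -> qset n (Des s).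
Proof. by move=> Ps i; rewrite /Des (is_perm_size Ps) => /andP[]. Qed.

Lemma qset_GDes n s : is_perm n s -> qset n (GDes s).
Proof. by move=> Ps i; rewrite /GDes (is_perm_size Ps) => /andP[]. Qed.

Theorem theorem2p1 (n : nat) :
  (* order preservation *)
  (forall t t', nodes t = n -> nodes t' = n -> tam_le t t' -> subq (Lmap t) (Lmap t')) /\
  (forall t t', nodes t = n -> nodes t' = n -> tam_le t t' -> subq (Rmap t) (Rmap t')) /\
  (forall S S', qset n S -> qset n S' -> subq S S' -> tam_le (Cmap n S) (Cmap n S')) /\
  (forall s s', is_perm n s -> is_perm n s' -> weak_le s s' -> tam_le (lam s) (lam s')) /\
  (forall s s', is_perm n s -> is_perm n s' -> weak_le s s' -> tam_le (rho s) (rho s')) /\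
  (forall t t', nodes t = n -> nodes t' = n -> tam_le t t' -> weak_le (gam t) (gam t')) /\
  (forall s s', is_perm n s -> is_perm n s' -> weak_le s s' -> subq (Des s) (Des s')) /\
  (forall s s', is_perm n s -> is_perm n s' -> weak_le s s' -> subq (GDes s) (GDes s')) /\
  (forall S S', qset n S -> qset n S' -> subq S S' -> weak_le (Zmap n S) (Zmap n S')) /\
  (* identities *)
  (forall s, is_perm n s -> Lmap (lam s) =1 Des s) /\
  (forall S, qset n S -> gam (Cmap n S) = Zmap n S) /\
  (forall s, is_perm n s -> Rmap (rho s) =1 GDes s) /\
  (* Galois connections *)
  (forall s t, is_perm n s -> nodes t = n -> (tam_le (lam s) t <-> weak_le s (gam t))) /\
  (forall t S, nodes t = n -> qset n S -> (subq (Lmap t) S <-> tam_le t (Cmap n S))) /\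
  (forall s S, is_perm n s -> qset n S -> (subq (Des s) S <-> weak_le s (Zmap n S))) /\
  (forall t s, nodes t = n -> is_perm n s -> (weak_le (gam t) s <-> tam_le t (rho s))) /\
  (forall S t, qset n S -> nodes t = n -> (tam_le (Cmap n S) t <-> subq S (Rmap t))) /\
  (forall S s, qset n S -> is_perm n s -> (weak_le (Zmap n S) s <-> subq S (GDes s))).
Proof.
split; first exact: galois_homo_left (@Lmap_Cmap_galois n) (@qset_Lmap n) subq_refl tam_trans.
split; first exact: galois_homo_right (@Cmap_Rmap_galois n) (@qset_Rmap n) subq_refl tam_trans.
split; first exact: galois_homo_right (@Lmap_Cmap_galois n) (@nodes_Cmap n) tam_le_refl subq_trans.
split; first exact: galois_homo_left (@lam_gam_galois n) (@nodes_lam n) tam_le_refl weak_trans.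
split; first exact: galois_homo_right (@gam_rho_galois n) (@nodes_rho n) tam_le_refl weak_trans.
split; first exact: galois_homo_left (@gam_rho_galois n) (@gam_is_perm_nodes n) weak_refl tam_trans.
split; first exact: galois_homo_left (@Des_Zmap_galois n) (@qset_Des n) subq_refl weak_trans.
split; first exact: galois_homo_right (@Zmap_GDes_galois n) (@qset_GDes n) subq_refl weak_trans.
split; first exact: galois_homo_left (@Zmap_GDes_galois n) (@Zmap_is_perm n) weak_refl subq_trans.
split; first exact: @Lmap_lam n.
split; first by move=> S _; apply: gam_Cmap.
split; first exact: @Rmap_rho n.
split; first exact: @lam_gam_galois n.
split; first exact: @Lmap_Cmap_galois n.
split; first exact: @Des_Zmap_galois n.
split; first exact: @gam_rho_galois n.
split; first exact: @Cmap_Rmap_galois n.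
exact: @Zmap_GDes_galois n.
Qed.
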